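(* Let $n\ge 3$ and let $\mathcal{P}_E^c(D_{2n})$ be the conjugacy super enhanced power graph of the dihedral group $D_{2n}$. (i) If $n$ is odd, the Sombor spectrum of $\mathcal{P}_E^c(D_{2n})$ consists of $-(n-1)\sqrt2$ with multiplicity $n-2$, $-n\sqrt2$ with multiplicity $n-1$, and the three roots (with multiplicity) of \[x\big(x-(n-1)(n-2)\sqrt2\big)\big(x-n(n-1)\sqrt2\big)-(n-1)(5n^2-6n+2)\big(x-n(n-1)\sqrt2\big)-n(5n^2-4n+1)\big(x-(n-1)(n-2)\sqrt2\big).\] (ii) If $n$ is even, the Sombor spectrum consists of $-\tfrac n2\sqrt2$ with multiplicity $n-2$, $-(n-1)\sqrt2$ with multiplicity $n-2$, $\tfrac{n(n-2)}{4}\sqrt2$ with multiplicity $1$, and the three roots (with multiplicity) of \[x\big(x-(n-1)(n-2)\sqrt2\big)\Big(x-\tfrac{n(n-2)}{4}\sqrt2\Big)-(n-1)(5n^2-6n+2)\Big(x-\tfrac{n(n-2)}{4}\sqrt2\Big)-\tfrac n4(17n^2-16n+4)\big(x-(n-2)(n-1)\sqrt2\big).\]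
   Context: For a finite simple graph $\Gamma$ with vertices $u_1,\dots,u_N$, the Sombor matrix $S(\Gamma)$ has $(i,j)$ entry $\sqrt{\deg(u_i)^2+\deg(u_j)^2}$ if $u_i,u_j$ are adjacent and $0$ otherwise; the Sombor spectrum is the multiset of its eigenvalues. $D_{2n}=\langle a,b: a^n=b^2=e,\ ba=a^{-1}b\rangle$. The enhanced power graph $\mathcal{P}_E(G)$ has vertex set $G$, distinct vertices adjacent iff they lie in a common cyclic subgroup. The conjugacy super enhanced power graph $\mathcal{P}_E^c(G)$ has vertex set $G$, and distinct $g,h$ are adjacent iff $g,h$ are conjugate or there exist $g'$ conjugate to $g$ and $h'$ conjugate to $h$ adjacent in $\mathcal{P}_E(G)$. *)

From HB Require Import structures.
From mathcomp Require Import all_boot all_order all_algebra all_fingroup all_solvable.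
Set Implicit Arguments. Unset Strict Implicit. Unset Printing Implicit Defensive.
Import Order.TTheory GRing.Theory Num.Theory.
Local Open Scope ring_scope.

Definition vdeg (T : finType) (adj : rel T) (x : T) : nat := #|[set y | adj x y]|.

(* Sombor matrix of the graph (T, adj); vertices u_1..u_N are the elements of T
   listed by enum_val (the spectrum does not depend on this ordering). *)
Definition sombor_matrix (R : rcfType) (T : finType) (adj : rel T) : 'M[R]_#|T| :=
  \matrix_(i < #|T|, j < #|T|)
    (if adj (enum_val i) (enum_val j)
     then Num.sqrt (((vdeg adj (enum_val i)) ^ 2 + (vdeg adj (enum_val j)) ^ 2)%N%:R)
     else 0 : R).

Definition enh_pow_adj (gT : finGroupType) : rel gT :=
  fun x y => (x != y) && [exists z : gT, (x \in <[z]>%g) && (y \in <[z]>%g)].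

Definition conj_super_enh_adj (gT : finGroupType) : rel gT :=
  fun x y => (x != y) &&
    ((y \in (x ^: [set: gT])%g) ||
     [exists x' : gT, exists y' : gT,
        [&& x' \in (x ^: [set: gT])%g, y' \in (y ^: [set: gT])%g & enh_pow_adj x' y']]).

From HB Require Import structures.
From mathcomp Require Import all_boot all_order all_algebra all_fingroup all_solvable.
From mathcomp Require Import ring zify.
Set Implicit Arguments. Unset Strict Implicit. Unset Printing Implicit Defensive.
Import Order.TTheory GRing.Theory Num.Theory.

(* Sort the elements of D_2n = <x, y> into four kinds: the identity, the other
   rotations, the reflections conjugate to y (those g with g y in <x^2>), and
   the remaining reflections (there are none when n is odd).  A reflection
   generates a group of order 2 and conjugation preserves kinds, so two distinct
   elements are adjacent iff one of them is the identity or they have the same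
   kind.  Hence degrees and Sombor weights only depend on kinds, and t - S is a
   diagonal matrix minus the product of an N x 4 and a 4 x N matrix.  By the
   Sylvester determinant identity, det (t - S) is a product of powers of the
   t + w_kk times a 4 x 4 arrowhead determinant, which is expanded explicitly;
   both sides of the claimed identity then agree at every t > 0. *)

Local Open Scope ring_scope.

Lemma horner_char_poly (R : comNzRingType) N (A : 'M[R]_N) (x : R) :
  (char_poly A).[x] = \det (x%:M - A).
Proof.
rewrite /char_poly -horner_evalE -det_map_mx /char_poly_mx map_mxB map_scalar_mx /=.
rewrite horner_evalE hornerX; congr (\det (_ - _)); apply/matrixP=> i j.
by rewrite !mxE /= ?horner_evalE ?hornerC.
Qed.

Lemma exprSr_subn1 (R : pzSemiRingType) (a : R) k :
  (0 < k)%N -> a ^+ k = a ^+ (k - 1) * a.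
Proof. by move=> k_gt0; rewrite -exprSr subn1 prednK. Qed.

Lemma poly_eq_on_pos (R : numDomainType) (p q : {poly R}) :
  (forall x, 0 < x -> p.[x] = q.[x]) -> p = q.
Proof.
move=> pq; apply/eqP; rewrite -subr_eq0; apply/eqP.
apply: (@roots_geq_poly_eq0 _ _ [seq i.+1%:R | i <- iota 0 (size (p - q))]).
- by apply/allP=> _ /mapP[i _ ->]; rewrite /root !hornerE pq ?ltr0Sn ?subrr.
- by rewrite map_inj_uniq ?iota_uniq // => i j /eqP; rewrite eqr_nat => /eqP [].
- by rewrite size_map size_iota.
Qed.

Lemma det_sub_mulmx (R : comNzRingType) N m (D Di : 'M[R]_N)
    (B : 'M[R]_(N, m)) (C : 'M[R]_(m, N)) :
  D *m Di = 1%:M -> \det (D - B *m C) = \det D * \det (1%:M - C *m Di *m B).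
Proof.
move=> DDi.
have e1 : block_mx 1%:M B 0 1%:M *m block_mx (D - B *m C) 0 C 1%:M = block_mx D B C 1%:M.
  by rewrite mulmx_block ?mul1mx ?mul0mx ?mulmx0 ?mulmx1 ?addr0 ?add0r subrK.
have e2 : block_mx D 0 C 1%:M *m block_mx 1%:M (Di *m B) 0 (1%:M - C *m Di *m B)
    = block_mx D B C 1%:M.
  rewrite mulmx_block ?mul1mx ?mul0mx ?mulmx0 ?mulmx1 ?addr0 ?add0r mulmxA DDi mul1mx.
  by rewrite mulmxA addrC subrK.
have := congr1 determinant e1; rewrite -e2 !det_mulmx det_ublock det_lblock det_ublock.
by rewrite det_lblock !det1 !mul1r !mulr1 => ->.
Qed.

Section ClassMatrix.
Variables (R : fieldType) (N m : nat) (tau : 'I_N -> 'I_m) (w : 'I_m -> 'I_m -> R).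

Definition class_mx : 'M[R]_N :=
  \matrix_(i, j) (if i == j then 0 else w (tau i) (tau j)).

Definition class_card (k : 'I_m) : nat := #|[set i | tau i == k]|.

Lemma det_scalar_sub_class_mx (x : R) : (forall k, x + w k k != 0) ->
  \det (x%:M - class_mx) =
  (\prod_k (x + w k k) ^+ class_card k) *
  \det (1%:M - \matrix_(k, l) (w k l * (class_card l)%:R / (x + w l l))).
Proof.
move=> w_nz.
pose B : 'M[R]_(N, m) := \matrix_(i, k) (tau i == k)%:R.
pose C : 'M[R]_(m, N) := \matrix_(k, j) w k (tau j).
pose d := \row_i (x + w (tau i) (tau i)).
pose di := \row_i (x + w (tau i) (tau i))^-1.
have -> : x%:M - class_mx = diag_mx d - B *m C.
  apply/matrixP=> i j; rewrite !mxE (bigD1 (tau i)) //= big1 => [|k /negbTE ki].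
    rewrite !mxE eqxx mul1r addr0.
    by case: eqVneq => [->|_]; rewrite ?mulr1n ?subr0 ?addrK // mulr0n.
  by rewrite !mxE eq_sym ki mul0r.
rewrite (det_sub_mulmx (Di := diag_mx di)); last first.
  by rewrite mulmx_diag -diag_const_mx; congr diag_mx; apply/rowP=> i; rewrite !mxE mulfV.
congr (_ * _); last congr (\det (_ - _)).
  rewrite det_diag (partition_big tau xpredT) //=; apply: eq_bigr => k _.
  rewrite (eq_bigr (fun=> x + w k k)) => [|i /eqP <-]; last by rewrite mxE.
  by rewrite prodr_const /class_card cardsE.
apply/matrixP=> k l; rewrite !mxE.
rewrite (eq_bigr (fun i => if tau i == l then w k l / (x + w l l) else 0)); last first.
  move=> i _; rewrite !mxE (bigD1 i) //= big1 => [|j /negbTE ji]; last first.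
    by rewrite !mxE ji mulr0n mulr0.
  by rewrite !mxE eqxx mulr1n addr0; case: eqVneq => [<-|_]; rewrite ?mulr1 ?mulr0.
rewrite -big_mkcond /= sumr_const /class_card cardsE -mulr_natr mulrAC.
by rewrite mul1r mulr_natr.
Qed.

End ClassMatrix.

Section NatIndexedDet.
Variable R : comNzRingType.

(* Minors are written with the named [minor_fun] rather than a lambda, which
   rewriting would beta-reduce into a term that no longer matches the left-hand
   side of [expand_det_matrix_nat]; this lets the expansion be iterated. *)
Definition minor_fun (F : nat -> nat -> R) (j a b : nat) : R := F a.+1 (bump j b).

Lemma expand_det_matrix_nat n (F : nat -> nat -> R) :
  \det (\matrix_(i < n.+1, j < n.+1) F i j) =
  \sum_(j < n.+1) (-1) ^+ j * F 0%N j * \det (\matrix_(i < n, k < n) minor_fun F j i k).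
Proof.
rewrite (expand_det_row _ ord0); apply: eq_bigr => j _.
rewrite /cofactor mxE add0n mulrCA mulrA; congr (_ * \det _).
by apply/matrixP => i k; rewrite !mxE.
Qed.

Lemma det_matrix4_arrowhead (F : nat -> nat -> R) :
  F 1 2 = 0 -> F 1 3 = 0 -> F 2 1 = 0 -> F 2 3 = 0 -> F 3 1 = 0 -> F 3 2 = 0 ->
  \det (\matrix_(i < 4, j < 4) F i j) =
  F 0 0 * F 1 1 * F 2 2 * F 3 3 - F 0 1 * F 1 0 * F 2 2 * F 3 3
  - F 0 2 * F 2 0 * F 1 1 * F 3 3 - F 0 3 * F 3 0 * F 1 1 * F 2 2.
Proof.
move=> F12 F13 F21 F23 F31 F32.
do !rewrite expand_det_matrix_nat !big_ord_recl big_ord0.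
by rewrite !det_mx00 /minor_fun /= F12 F13 F21 F23 F31 F32; ring.
Qed.

End NatIndexedDet.

Section SomborByKind.
Variables (R : rcfType) (T : finType) (adj : rel T) (m : nat) (kind : T -> nat).
Variables (A : rel nat) (d : nat -> nat).
Hypotheses (kind_lt : forall u, (kind u < m)%N)
  (adjE : forall u v, adj u v = (u != v) && A (kind u) (kind v))
  (vdegE : forall u, vdeg adj u = d (kind u)).

Definition sombor_weight (k l : nat) : R :=
  if A k l then Num.sqrt ((d k ^ 2 + d l ^ 2)%N%:R) else 0.

Definition kind_card (k : nat) : nat := #|[set u | kind u == k]|.

Definition sombor_quotient (x : R) (k l : nat) : R :=
  (k == l)%:R - sombor_weight k l * (kind_card l)%:R / (x + sombor_weight l l).

Lemma sum_kind_card : (\sum_(k < m) kind_card k)%N = #|T|.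
Proof.
rewrite -sum1_card (partition_big (fun u => Ordinal (kind_lt u)) xpredT) //=.
apply: eq_bigr => k _; rewrite sum1_card /kind_card cardsE.
by apply: eq_card.
Qed.

Let tau (i : 'I_#|T|) : 'I_m := Ordinal (kind_lt (enum_val i)).

Lemma sombor_matrix_kind :
  sombor_matrix R adj = class_mx tau (fun k l => sombor_weight k l).
Proof.
apply/matrixP=> i j; rewrite !mxE adjE (inj_eq enum_val_inj) /sombor_weight !vdegE.
by case: eqVneq => //= _; case: A.
Qed.

Lemma class_card_kind (k : 'I_m) : class_card tau k = kind_card k.
Proof.
rewrite /class_card /kind_card -(card_imset _ enum_val_inj).
apply: eq_card => u; rewrite inE; apply/imsetP/idP => [[i]|ku].
  by rewrite inE -val_eqE => /= ? ->.
by exists (enum_rank u); rewrite ?enum_rankK // inE -val_eqE /= enum_rankK.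
Qed.

Lemma horner_char_poly_sombor (x : R) : (forall k : 'I_m, x + sombor_weight k k != 0) ->
  (char_poly (sombor_matrix R adj)).[x] =
  (\prod_(k < m) (x + sombor_weight k k) ^+ kind_card k) *
  \det (\matrix_(k < m, l < m) sombor_quotient x k l).
Proof.
move=> w_nz; rewrite horner_char_poly sombor_matrix_kind det_scalar_sub_class_mx //.
congr (_ * _); first by apply: eq_bigr => k _; rewrite class_card_kind.
by congr determinant; apply/matrixP=> k l; rewrite !mxE class_card_kind.
Qed.

End SomborByKind.

Section ConjSuperEnhancedPowerGraph.
Local Open Scope group_scope.
Variable gT : finGroupType.

Lemma enh_pow_adj_sym : symmetric (@enh_pow_adj gT).
Proof.
move=> g h; rewrite /enh_pow_adj eq_sym; congr (_ && _).
by apply: eq_existsb => z; exact: andbC.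
Qed.

Lemma conj_super_enh_adj_sym : symmetric (@conj_super_enh_adj gT).
Proof.
move=> g h; rewrite /conj_super_enh_adj eq_sym class_sym; congr (_ && (_ || _)).
apply/existsP/existsP=> -[g' /existsP[h' /and3P[g'g h'h adj']]];
  by exists h'; apply/existsP; exists g'; rewrite g'g h'h enh_pow_adj_sym.
Qed.

Lemma conj_super_enh_adj_cycle (g h z : gT) :
  g != h -> g \in <[z]> -> h \in <[z]> -> conj_super_enh_adj g h.
Proof.
move=> gh gz hz; rewrite /conj_super_enh_adj gh; apply/orP; right.
apply/existsP; exists g; apply/existsP; exists h; rewrite !class_refl /enh_pow_adj gh.
by apply/existsP; exists z; rewrite gz hz.
Qed.

End ConjSuperEnhancedPowerGraph.

Section Dihedral.
Local Open Scope group_scope.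
Variables (gT : finGroupType) (n : nat) (x y : gT).
Hypotheses (n_gt0 : (0 < n)%N) (gen_xy : <[x]> <*> <[y]> = [set: gT])
  (xn : x ^+ n = 1) (y2 : y ^+ 2 = 1) (xJy : x ^ y = x^-1)
  (card_gT : #|[set: gT]| = (2 * n)%N).

Lemma mulyy : y * y = 1.
Proof. by rewrite -{2}(expg1 y) -expgS y2. Qed.

Lemma invy : y^-1 = y.
Proof. by apply/eqP; rewrite eq_invg_mul mulyy. Qed.

Lemma conjy_rot a : a \in <[x]> -> a ^ y = a^-1.
Proof. by case/cycleP=> i ->; rewrite conjXg xJy expVgn. Qed.

Lemma y_mul_rot a : a \in <[x]> -> y * a = a^-1 * y.
Proof. by move=> ax; rewrite -(conjy_rot ax) conjgE invy -!mulgA mulyy mulg1. Qed.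

Lemma commute_rot a b : a \in <[x]> -> b \in <[x]> -> commute a b.
Proof. by case/cycleP=> i -> /cycleP[j ->]; apply: commuteX2. Qed.

Lemma cycle_x_norm : [set: gT] \subset 'N(<[x]>).
Proof.
rewrite -gen_xy join_subG !cycle_subG (subsetP (normG _)) ?cycle_id //=.
by rewrite inE -cycleJ xJy cycleV.
Qed.

Lemma memJ_rot a c : (a ^ c \in <[x]>) = (a \in <[x]>).
Proof. by rewrite memJ_norm // (subsetP cycle_x_norm) ?inE. Qed.

Lemma mul_cycle_xy : <[x]> * <[y]> = [set: gT].
Proof. by rewrite -norm_joinEr ?gen_xy // cycle_subG (subsetP cycle_x_norm) ?inE. Qed.

Lemma orders_xy : #[x] = n /\ #[y] = 2.
Proof.
have := mul_cardG <[x]> <[y]>; rewrite mul_cycle_xy card_gT -!orderE.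
have /(dvdn_leq n_gt0) : (#[x] %| n)%N by rewrite order_dvdn xn.
have /(@dvdn_leq _ 2 isT) : (#[y] %| 2)%N by rewrite order_dvdn y2.
have : (0 < #|<[x]> :&: <[y]>|)%N by apply/card_gt0P; exists 1; rewrite group1.
have := order_gt0 x; have := order_gt0 y.
by move: #|_ :&: _| => k *; split; nia.
Qed.

Lemma order_x : #[x] = n.
Proof. by case: orders_xy. Qed.

Lemma y_notin_rot : y \notin <[x]>.
Proof.
apply/negP=> yx; have := mul_cardG <[x]> <[y]>; rewrite mul_cycle_xy card_gT.
rewrite (setIidPr _) ?cycle_subG // -!orderE; case: orders_xy => -> ->; nia.
Qed.

Lemma reflection_mul_y g : g \notin <[x]> -> g * y \in <[x]>.
Proof.
have : g \in <[x]> * <[y]> by rewrite mul_cycle_xy inE.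
case/mulsgP=> a b ax /cycleP[i ->] ->; rewrite -(expg_mod i y2) modn2.
by case: (odd i) => /=; rewrite ?expg1 -?mulgA ?mulyy ?mulg1 ?expg0 ?mulg1 ?ax.
Qed.

Lemma reflection_sq g : g \notin <[x]> -> g ^+ 2 = 1.
Proof.
move=> gx; have [a ax ->] : exists2 a, a \in <[x]> & g = a * y.
  by exists (g * y); rewrite ?reflection_mul_y // -mulgA mulyy mulg1.
rewrite expgS expg1 -mulgA (mulgA y) -{1}invy.
by rewrite -mulgA -conjgE conjy_rot // mulgV.
Qed.

Lemma mem_cycle_reflection g u : g \notin <[x]> -> u \in <[g]> -> u = 1 \/ u = g.
Proof.
move=> gx /cycleP[i ->]; rewrite -(expg_mod i (reflection_sq gx)) modn2.
by case: (odd i); [right; rewrite expg1 | left; rewrite expg0].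
Qed.

Lemma enh_pow_adj_reflection u v : enh_pow_adj u v -> v \notin <[x]> -> u = 1.
Proof.
case/andP=> uv /existsP[z /andP[uz vz]] vx.
have [zx|zx] := boolP (z \in <[x]>).
  by move: vx; rewrite (subsetP _ _ vz) // cycle_subG.
case: (mem_cycle_reflection zx vz) => ev; first by move: vx; rewrite ev group1.
by case: (mem_cycle_reflection zx uz) => // eu; move: uv; rewrite eu ev eqxx.
Qed.

Lemma conj_super_enh_adj_reflection g h : g != 1 -> h \notin <[x]> ->
  conj_super_enh_adj g h = (g != h) && (h \in g ^: [set: gT]).
Proof.
move=> g1 hx; rewrite /conj_super_enh_adj; case: (g != h) (h \in _) => //= [] [] //=.
apply/existsP=> -[g' /existsP[h' /and3P[/imsetP[c _ ->] /imsetP[d _ ->]]]].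
move/enh_pow_adj_reflection; rewrite memJ_rot => /(_ hx) /eqP.
by rewrite conjg_eq1 (negbTE g1).
Qed.

Lemma reflectionJ_rot a d : a \in <[x]> -> d \in <[x]> ->
  (a * y) ^ d = a * d^-1 * d^-1 * y.
Proof.
move=> ax dx; rewrite conjgE -!mulgA y_mul_rot // !mulgA; congr (_ * _ * _).
by apply: commute_rot; rewrite ?groupV.
Qed.

Lemma reflectionJy a : a \in <[x]> -> (a * y) ^ y = a^-1 * y.
Proof. by move=> ax; rewrite conjgE invy -!mulgA mulyy mulg1 y_mul_rot. Qed.

Lemma mul_rot_sq a : a \in <[x]> -> a * a \in <[x ^+ 2]>.
Proof. by case/cycleP=> i ->; rewrite -expgD addnn -mul2n expgM mem_cycle. Qed.

Lemma rot_parity a : a \in <[x]> -> a \in <[x ^+ 2]> \/ a * x^-1 \in <[x ^+ 2]>.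
Proof.
case/cycleP=> i ->; rewrite (divn_eq i 2) modn2 mulnC expgD expgM.
by case: (odd i); [right; rewrite expg1 mulgK | left; rewrite expg0 mulg1]; rewrite mem_cycle.
Qed.

Lemma rot_parity_eq a b : a \in <[x]> -> b \in <[x]> ->
  (a \in <[x ^+ 2]>) = (b \in <[x ^+ 2]>) -> a^-1 * b \in <[x ^+ 2]>.
Proof.
move=> ax bx e; have [a2|a2] := boolP (a \in <[x ^+ 2]>).
  by rewrite groupMl ?groupV // -e.
have [b2|b2] := boolP (b \in <[x ^+ 2]>); first by move: e; rewrite b2 (negbTE a2).
case: (rot_parity ax) => [a2in|a2']; first by rewrite a2in in a2.
case: (rot_parity bx) => [b2in|b2']; first by rewrite b2in in b2.
have := groupM (groupVr a2') b2'; rewrite invMg invgK !mulgA -(mulgA x).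
by rewrite (commute_rot (cycle_id x) (groupM (groupVr ax) bx)) mulgK.
Qed.

Lemma reflection_class a b : a \in <[x]> -> b \in <[x]> ->
  (b * y \in (a * y) ^: [set: gT]) = ((a \in <[x ^+ 2]>) == (b \in <[x ^+ 2]>)).
Proof.
move=> ax bx; apply/idP/idP.
  case/imsetP=> c _ hc; have [cx|cx] := boolP (c \in <[x]>).
    move: hc; rewrite reflectionJ_rot // => /mulIg ->.
    by rewrite -mulgA (groupMr _ (mul_rot_sq (groupVr cx))).
  have cyx := reflection_mul_y cx; have ec : c = (c * y) * y by rewrite -mulgA mulyy mulg1.
  move: hc; rewrite ec conjgM reflectionJ_rot // reflectionJy; last by rewrite !groupM ?groupV.
  move=> /mulIg ->; rewrite groupV -mulgA.
  by rewrite (groupMr _ (mul_rot_sq (groupVr cyx))).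
move=> /eqP/(rot_parity_eq ax bx)/cycleP[k ek].
apply/imsetP; exists (x ^+ k)^-1; rewrite ?inE //.
rewrite reflectionJ_rot ?groupV ?mem_cycle // !invgK -(mulgA a) -expgD addnn -mul2n.
by rewrite expgM -ek mulKVg.
Qed.

Lemma reflection_classE g h : g \notin <[x]> -> h \notin <[x]> ->
  (h \in g ^: [set: gT]) = ((g * y \in <[x ^+ 2]>) == (h * y \in <[x ^+ 2]>)).
Proof.
move=> gx hx; rewrite -reflection_class ?reflection_mul_y //.
by rewrite -!mulgA mulyy !mulg1.
Qed.

Lemma mul_y_x2_notin_rot g : g * y \in <[x ^+ 2]> -> g \notin <[x]>.
Proof.
move=> /(subsetP (cycleX x 2)) gyx; apply/negP=> gx.
by move: y_notin_rot; rewrite -(groupMl _ gx) gyx.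
Qed.

Definition kind (g : gT) : nat :=
  (if g == 1%g then 0 else if g \in <[x]> then 1
   else if (g * y)%g \in <[x ^+ 2]> then 2 else 3)%N.

Definition kind_adj (k l : nat) : bool := [|| k == 0, l == 0 | k == l]%N.

Lemma kind_lt4 g : (kind g < 4)%N.
Proof. by rewrite /kind; repeat case: ifP. Qed.

Lemma conj_super_enh_adj_kind g h :
  g != h -> conj_super_enh_adj g h = kind_adj (kind g) (kind h).
Proof.
rewrite /kind_adj /kind; case: (eqVneq g 1) => [-> gh|g1 gh].
  by rewrite (conj_super_enh_adj_cycle gh (group1 _) (cycle_id h)).
case: (eqVneq h 1) gh => [-> gh|h1 gh].
  rewrite orbT conj_super_enh_adj_sym.
  by rewrite (conj_super_enh_adj_cycle _ (group1 _) (cycle_id g)) // eq_sym.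
have notJ_rot a b : a \in <[x]> -> b \notin <[x]> -> (b \in a ^: [set: gT]) = false.
  by move=> ax bx; apply/negbTE; apply: contra bx => /imsetP[c _ ->]; rewrite memJ_rot.
have [gx|gx] := boolP (g \in <[x]>); have [hx|hx] := boolP (h \in <[x]>) => /=.
- exact: conj_super_enh_adj_cycle gh gx hx.
- by rewrite conj_super_enh_adj_reflection // notJ_rot // andbF; case: ifP.
- rewrite conj_super_enh_adj_sym conj_super_enh_adj_reflection // notJ_rot //.
  by rewrite andbF; case: ifP.
- by rewrite conj_super_enh_adj_reflection // gh reflection_classE //=; do 2 case: ifP.
Qed.

Lemma kind_eq0 g : (kind g == 0)%N = (g == 1).
Proof. by rewrite /kind; case: (eqVneq g 1) => //= _; repeat case: ifP. Qed.

Lemma kind_eq1 g : (kind g == 1)%N = (g != 1) && (g \in <[x]>).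
Proof. by rewrite /kind; case: (eqVneq g 1) => //= _; repeat case: ifP. Qed.

Lemma kind_eq2 g : (kind g == 2)%N = (g * y \in <[x ^+ 2]>).
Proof.
rewrite /kind; case: (eqVneq g 1) => [->|_].
  rewrite mul1g; apply/esym/negbTE; apply: contra y_notin_rot.
  exact: (subsetP (cycleX x 2)).
by case: ifP => [gx|_]; [apply/esym/negP => /mul_y_x2_notin_rot; rewrite gx | case: ifP].
Qed.

Lemma kind_card0 : kind_card kind 0 = 1%N.
Proof.
rewrite /kind_card (_ : [set g | _] = [set 1]) ?cards1 //.
by apply/setP=> g; rewrite !inE kind_eq0.
Qed.

Lemma kind_card1 : kind_card kind 1 = (n - 1)%N.
Proof.
rewrite /kind_card (_ : [set g | _] = <[x]> :\ 1); last first.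
  by apply/setP=> g; rewrite !inE kind_eq1.
by have := cardsD1 1 <[x]>; rewrite group1 -orderE order_x => ->; rewrite addKn.
Qed.

Lemma kind_card2 : kind_card kind 2 = #[x ^+ 2].
Proof.
rewrite /kind_card (_ : [set g | _] = <[x ^+ 2]> :* y) ?card_rcoset //.
by apply/setP=> g; rewrite !inE kind_eq2 mem_rcoset invy.
Qed.

Lemma kind_card3 : kind_card kind 3 = (n - #[x ^+ 2])%N.
Proof.
have := sum_kind_card kind_lt4; rewrite -cardsT card_gT !big_ord_recl big_ord0 /= /bump /=.
by rewrite !addn0 !add1n kind_card0 kind_card1 kind_card2; lia.
Qed.

Definition kind_deg (k : nat) : nat := if k == 0 then (2 * n - 1)%N else kind_card kind k.

Lemma vdeg_kind g : vdeg (@conj_super_enh_adj gT) g = kind_deg (kind g).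
Proof.
rewrite /vdeg (_ : [set h | _] = [set h | kind_adj (kind g) (kind h)] :\ g); last first.
  apply/setP=> h; rewrite !inE; case: eqVneq => [->|hg] /=.
    by rewrite /conj_super_enh_adj eqxx.
  by rewrite conj_super_enh_adj_kind // eq_sym.
set A := [set h | _]; have -> : #|A :\ g| = #|A|.-1.
  by rewrite [#|A|](cardsD1 g) inE /kind_adj eqxx !orbT.
rewrite /A /kind_deg; case: eqP => [-> | /eqP k0].
  by rewrite (_ : [set h | _] = setT) ?card_gT ?subn1 //; apply/setP=> h; rewrite !inE.
rewrite (_ : [set h | _] = [set h | kind h == 0] :|: [set h | kind h == kind g]); last first.
  by apply/setP=> h; rewrite !inE /kind_adj (negbTE k0) [kind g == _]eq_sym.
rewrite cardsU (_ : _ :&: _ = set0) ?cards0 ?subn0; last first.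
  by apply/setP=> h; rewrite !inE; case: eqP => //= ->; rewrite eq_sym (negbTE k0).
by rewrite -/(kind_card kind 0) kind_card0.
Qed.

Lemma order_x2_odd : odd n -> #[x ^+ 2] = n.
Proof.
rewrite orderXgcd order_x -coprimen2 => /eqP ->; exact: divn1.
Qed.

Lemma order_x2_even : ~~ odd n -> (2 * #[x ^+ 2])%N = n.
Proof.
rewrite orderXgcd order_x -dvdn2 => n_even.
by rewrite (gcdn_idPr n_even) mulnC divnK.
Qed.

Section SomborSpectrum.
Variable R : rcfType.
Local Open Scope ring_scope.

Local Notation w := (sombor_weight R kind_adj kind_deg).
Local Notation Q := (sombor_quotient kind kind_adj kind_deg).

Lemma add_natmul_sqrt2_neq0 (t : R) k : 0 < t -> t + k%:R * Num.sqrt 2 != 0.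
Proof. by move=> t_gt0; rewrite gt_eqF // ltr_wpDr // mulr_ge0 ?sqrtr_ge0. Qed.

Lemma sombor_weight_ge0 k l : 0 <= w k l.
Proof. by rewrite /sombor_weight; case: ifP => _; rewrite ?sqrtr_ge0. Qed.

Lemma sombor_weight_diag k : w k k = (kind_deg k)%:R * Num.sqrt 2.
Proof.
rewrite /sombor_weight /kind_adj eqxx !orbT addnn -mul2n natrM natrX mulrC.
by rewrite sqrtrM ?exprn_ge0 ?ler0n // sqrtr_sqr ger0_norm ?ler0n.
Qed.

Lemma horner_char_poly_dihedral (t : R) : 0 < t ->
  (char_poly (sombor_matrix R (@conj_super_enh_adj gT))).[t] =
  (t + w 0 0) ^+ kind_card kind 0 * ((t + w 1 1) ^+ kind_card kind 1 *
    ((t + w 2 2) ^+ kind_card kind 2 * (t + w 3 3) ^+ kind_card kind 3)) *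
  (Q t 0 0 * Q t 1 1 * Q t 2 2 * Q t 3 3 - Q t 0 1 * Q t 1 0 * Q t 2 2 * Q t 3 3
   - Q t 0 2 * Q t 2 0 * Q t 1 1 * Q t 3 3 - Q t 0 3 * Q t 3 0 * Q t 1 1 * Q t 2 2).
Proof.
move=> t_gt0; rewrite (horner_char_poly_sombor (A := kind_adj) (d := kind_deg) kind_lt4).
- rewrite !big_ord_recl big_ord0 mulr1 det_matrix4_arrowhead //;
  by rewrite /sombor_quotient /sombor_weight /= !mul0r subr0.
- move=> g h; case: eqVneq => [->|gh]; last exact: conj_super_enh_adj_kind.
  by rewrite /conj_super_enh_adj eqxx.
- exact: vdeg_kind.
- by move=> k; rewrite gt_eqF // ltr_wpDr // sombor_weight_ge0.
Qed.

Lemma sombor_quotient_diag (t : R) k :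
  Q t k k =
  1 - (kind_deg k)%:R * Num.sqrt 2 * (kind_card kind k)%:R
      / (t + (kind_deg k)%:R * Num.sqrt 2).
Proof. by rewrite /sombor_quotient eqxx sombor_weight_diag. Qed.

Lemma sombor_weight_arrow k : (0 < k)%N ->
  w 0 k * w k 0 = (kind_deg 0 ^ 2 + kind_deg k ^ 2)%N%:R.
Proof.
move=> k_gt0; rewrite /sombor_weight /kind_adj eqxx /= orbT.
by rewrite (addnC (kind_deg k ^ 2)%N) -expr2 sqr_sqrtr ?ler0n.
Qed.

Lemma sombor_quotient_arrow (t : R) k : (0 < k)%N ->
  Q t 0 k * Q t k 0 =
  (kind_deg 0 ^ 2 + kind_deg k ^ 2)%N%:R * (kind_card kind k)%:R / ((t + w k k) * (t + w 0 0)).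
Proof.
move=> k_gt0; rewrite /sombor_quotient (gtn_eqF k_gt0) eq_sym (gtn_eqF k_gt0) kind_card0 /=.
by rewrite -(sombor_weight_arrow k_gt0) !sub0r mulrNN invfM; ring.
Qed.

Lemma char_poly_sombor_odd : (2 < n)%N -> odd n ->
  let s2 : R := Num.sqrt 2 in
  let nr : R := n%:R in
  char_poly (sombor_matrix R (@conj_super_enh_adj gT)) =
     ('X + ((nr - 1) * s2)%:P) ^+ (n - 2)
     * ('X + (nr * s2)%:P) ^+ (n - 1)
     * ('X * ('X - ((nr - 1) * (nr - 2) * s2)%:P) * ('X - (nr * (nr - 1) * s2)%:P)
        - ((nr - 1) * (5 * nr ^+ 2 - 6 * nr + 2))%:P * ('X - (nr * (nr - 1) * s2)%:P)
        - (nr * (5 * nr ^+ 2 - 4 * nr + 1))%:P * ('X - ((nr - 1) * (nr - 2) * s2)%:P)).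
Proof.
move=> n_gt2 n_odd s2 nr; apply: poly_eq_on_pos => t t_gt0.
have nz k := add_natmul_sqrt2_neq0 k t_gt0.
move: (nz (2 * n - 1)%N) (nz (n - 1)%N) (nz n).
rewrite horner_char_poly_dihedral // !sombor_quotient_arrow // !sombor_quotient_diag.
rewrite !sombor_weight_diag /kind_deg /=.
rewrite kind_card0 kind_card1 kind_card2 kind_card3 order_x2_odd // subnn.
rewrite [_ ^+ n]exprSr_subn1 // [_ ^+ (n - 1)]exprSr_subn1; last lia.
rewrite (_ : n - 1 - 1 = n - 2)%N; last lia.
rewrite !natrD !natrX !natrB ?natrM ?muln_gt0 //; try lia.
rewrite !(hornerD, hornerN, hornerM, hornerX, hornerC, horner_exp) /s2 /nr.
by move=> nz_2n1 nz_n1 nz_n; field; rewrite nz_n nz_n1 nz_2n1 gt_eqF.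
Qed.

Lemma char_poly_sombor_even : (2 < n)%N -> ~~ odd n ->
  let s2 : R := Num.sqrt 2 in
  let nr : R := n%:R in
  char_poly (sombor_matrix R (@conj_super_enh_adj gT)) =
     ('X + (nr / 2 * s2)%:P) ^+ (n - 2)
     * ('X + ((nr - 1) * s2)%:P) ^+ (n - 2)
     * ('X - (nr * (nr - 2) / 4 * s2)%:P)
     * ('X * ('X - ((nr - 1) * (nr - 2) * s2)%:P) * ('X - (nr * (nr - 2) / 4 * s2)%:P)
        - ((nr - 1) * (5 * nr ^+ 2 - 6 * nr + 2))%:P * ('X - (nr * (nr - 2) / 4 * s2)%:P)
        - (nr / 4 * (17 * nr ^+ 2 - 16 * nr + 4))%:P * ('X - ((nr - 2) * (nr - 1) * s2)%:P)).
Proof.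
move=> n_gt2 n_even s2 nr; apply: poly_eq_on_pos => t t_gt0.
have nz k := add_natmul_sqrt2_neq0 k t_gt0.
have n2c := order_x2_even n_even; set c := #[x ^+ 2] in n2c.
move: (nz (2 * n - 1)%N) (nz (n - 1)%N) (nz c).
rewrite horner_char_poly_dihedral // !sombor_quotient_arrow // !sombor_quotient_diag.
rewrite !sombor_weight_diag /kind_deg /= kind_card0 kind_card1 kind_card2 kind_card3 -/c.
rewrite (_ : n - c = c)%N; last lia.
rewrite [_ ^+ (n - 1)]exprSr_subn1; last lia.
rewrite [_ ^+ c]exprSr_subn1; last lia.
rewrite (_ : (n - 1 - 1 = (c - 1) + (c - 1))%N); last lia.
rewrite (_ : (n - 2 = (c - 1) + (c - 1))%N); last lia.
rewrite !exprD !natrD !natrX !natrB ?natrM ?muln_gt0 //; try lia.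
rewrite !(hornerD, hornerN, hornerM, hornerX, hornerC, horner_exp) /s2 /nr.
have -> : (n%:R / 2 : R) = c%:R by rewrite -n2c natrM mulrAC divff ?mul1r ?pnatr_eq0.
rewrite -n2c natrM => nz_2n1 nz_n1 nz_c.
by field; rewrite nz_c nz_n1 nz_2n1.
Qed.

End SomborSpectrum.

End Dihedral.

Lemma dihedral_generators n : (1 < n)%N -> exists x y : 'D_(2 * n),
  [/\ <[x]> <*> <[y]> = [set: 'D_(2 * n)], x ^+ n = 1, y ^+ 2 = 1 & x ^ y = x^-1]%g.
Proof.
move=> n_gt1; have := isoGrp_hom (Grp_dihedral n_gt1); rewrite -mul2n.
case/existsP=> -[x y] /=; rewrite !xpair_eqE /=.
by case/and4P=> /eqP ? /eqP ? /eqP ? /eqP ?; exists x, y.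
Qed.


Theorem corollary5p6 (R : rcfType) (n : nat) (hn : (3 <= n)%N) :
  let s2 : R := Num.sqrt 2 in
  let nr : R := n%:R in
  let S := sombor_matrix R (@conj_super_enh_adj 'D_(2 * n)) in
  (odd n ->
   char_poly S =
     ('X + ((nr - 1) * s2)%:P) ^+ (n - 2)
     * ('X + (nr * s2)%:P) ^+ (n - 1)
     * ('X * ('X - ((nr - 1) * (nr - 2) * s2)%:P) * ('X - (nr * (nr - 1) * s2)%:P)
        - ((nr - 1) * (5 * nr ^+ 2 - 6 * nr + 2))%:P * ('X - (nr * (nr - 1) * s2)%:P)
        - (nr * (5 * nr ^+ 2 - 4 * nr + 1))%:P * ('X - ((nr - 1) * (nr - 2) * s2)%:P)))
  /\
  (~~ odd n ->
   char_poly S =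
     ('X + (nr / 2 * s2)%:P) ^+ (n - 2)
     * ('X + ((nr - 1) * s2)%:P) ^+ (n - 2)
     * ('X - (nr * (nr - 2) / 4 * s2)%:P)
     * ('X * ('X - ((nr - 1) * (nr - 2) * s2)%:P) * ('X - (nr * (nr - 2) / 4 * s2)%:P)
        - ((nr - 1) * (5 * nr ^+ 2 - 6 * nr + 2))%:P * ('X - (nr * (nr - 2) / 4 * s2)%:P)
        - (nr / 4 * (17 * nr ^+ 2 - 16 * nr + 4))%:P * ('X - ((nr - 2) * (nr - 1) * s2)%:P))).
Proof.
have n_gt1 : (1 < n)%N by apply: ltnW.
have [x [y [gen_xy xn y2 xJy]]] := dihedral_generators n_gt1.
have card_D := card_dihedral n_gt1; rewrite -mul2n in card_D.
split.
- exact: char_poly_sombor_odd (ltnW n_gt1) gen_xy xn y2 xJy card_D R hn.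
- exact: char_poly_sombor_even (ltnW n_gt1) gen_xy xn y2 xJy card_D R hn.
Qed.
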